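(* Every perinormal domain $R$ satisfies (R$_1$), i.e., $R_{\mathfrak{p}}$ is a valuation domain for every height one prime $\mathfrak{p}$ of $R$.
   Context: All rings are commutative with identity; ''local'' means having a unique maximal ideal; an overring of a domain $R$ is a ring between $R$ and its fraction field. A ring extension $A \subseteq B$ satisfies going-down if whenever $\mathfrak{p} \subset \mathfrak{q}$ are primes of $A$ and $Q$ is a prime of $B$ with $Q \cap A = \mathfrak{q}$, there is a prime $P \subseteq Q$ of $B$ with $P \cap A = \mathfrak{p}$. A domain $R$ is perinormal if every local overring $S$ of $R$ such that $R \subseteq S$ satisfies going-down is a localization of $R$. *)

(* A domain R is represented as a subring of a field K
   whose fraction field is K; overrings, localizations and ideals are
   represented as subsets (predicates) of K. *)
From mathcomp Require Import all_boot all_algebra.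
Set Implicit Arguments. Unset Strict Implicit. Unset Printing Implicit Defensive.
Import GRing.Theory.
Local Open Scope ring_scope.

Section CommAlg.
Variable K : fieldType.
Implicit Types A B R S P Q I : K -> Prop.

Definition subset_of A B := forall x, A x -> B x.
Definition same_set A B := forall x, A x <-> B x.

Definition subring A : Prop :=
  A 0 /\ A 1 /\ (forall x y, A x -> A y -> A (x - y)) /\
  (forall x y, A x -> A y -> A (x * y)).

Definition frac_field_of R : Prop :=
  forall x : K, exists a b, R a /\ R b /\ b != 0 /\ x = a / b.

Definition overring R S : Prop := subring S /\ subset_of R S.

Definition ideal_of A I : Prop :=
  subset_of I A /\ I 0 /\ (forall x y, I x -> I y -> I (x + y)) /\
  (forall a x, A a -> I x -> I (a * x)).

Definition prime_of A P : Prop :=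
  ideal_of A P /\ ~ P 1 /\
  (forall a b, A a -> A b -> P (a * b) -> P a \/ P b).

Definition maximal_of A M : Prop :=
  ideal_of A M /\ ~ M 1 /\
  (forall I, ideal_of A I -> ~ I 1 -> subset_of M I -> subset_of I M).

Definition local_ring A : Prop :=
  exists M, maximal_of A M /\ forall N, maximal_of A N -> same_set N M.

Definition contracts_to A Q p : Prop := forall x, A x -> (Q x <-> p x).

Definition going_down A B : Prop :=
  forall p q Q, prime_of A p -> prime_of A q -> subset_of p q ->
    prime_of B Q -> contracts_to A Q q ->
    exists P, prime_of B P /\ subset_of P Q /\ contracts_to A P p.

Definition mult_subset R (Sg : K -> Prop) : Prop :=
  subset_of Sg R /\ Sg 1 /\ ~ Sg 0 /\ (forall s t, Sg s -> Sg t -> Sg (s * t)).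

Definition localization R (Sg : K -> Prop) : K -> Prop :=
  fun x => exists a s, R a /\ Sg s /\ x = a / s.

Definition is_localization_of R S : Prop :=
  exists Sg, mult_subset R Sg /\ same_set S (localization R Sg).

Definition perinormal R : Prop :=
  forall S, overring R S -> local_ring S -> going_down R S ->
    is_localization_of R S.

Definition zero_ideal : K -> Prop := fun x => x = 0.

Definition height_one R p : Prop :=
  prime_of R p /\ (exists x, p x /\ x != 0) /\
  (forall q, prime_of R q -> subset_of q p ->
     same_set q zero_ideal \/ same_set q p).

Definition prime_compl R p : K -> Prop := fun s => R s /\ ~ p s.

Definition valuation_domain V : Prop :=
  subring V /\ forall x : K, x != 0 -> V x \/ V x^-1.

End CommAlg.

(* By Zorn's lemma
   choose a pair (A, I), maximal for inclusion, of a subring A containing R_p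
   and a proper ideal I of A containing p.  Maximality makes A local with
   maximal ideal I, and Chevalley's argument makes it a valuation ring: if
   neither x nor 1/x lies in A, maximality yields relations 1 = f(x) and
   1 = g(1/x) with coefficients in I, and the one of larger degree can be
   shortened using the other, until 1 lies in I.  Moreover I lies over p, so
   every prime of A lies over a prime contained in p; hence going-down for R
   in A only has to be checked for the primes (0) and p, where it is
   immediate.  Perinormality
   then makes A a localization R_S of R; the elements of S are units of A, so
   they avoid I and hence p, giving A = R_p. *)
From mathcomp Require Import all_boot all_algebra ring zify.
From mathcomp Require boolp classical_sets.
From Stdlib Require Import Classical.
Set Implicit Arguments. Unset Strict Implicit. Unset Printing Implicit Defensive.
Import GRing.Theory.
Local Open Scope ring_scope.

Section SubringsAndIdeals.
Variable K : fieldType.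
Implicit Types A I : K -> Prop.

Lemma subring0 A : subring A -> A 0.
Proof. by case. Qed.

Lemma subring1 A : subring A -> A 1.
Proof. by case=> _ []. Qed.

Lemma subringB A x y : subring A -> A x -> A y -> A (x - y).
Proof. by move=> [_ [_ [AB _]]]; exact: AB. Qed.

Lemma subringM A x y : subring A -> A x -> A y -> A (x * y).
Proof. by move=> [_ [_ [_ AM]]]; exact: AM. Qed.

Lemma subringN A x : subring A -> A x -> A (- x).
Proof. by move=> HA Ax; rewrite -sub0r; exact: subringB (subring0 HA) Ax. Qed.

Lemma subringD A x y : subring A -> A x -> A y -> A (x + y).
Proof. by move=> HA Ax Ay; rewrite -[y]opprK; exact: subringB HA Ax (subringN HA Ay). Qed.

Lemma subring_exp A x n : subring A -> A x -> A (x ^+ n).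
Proof.
move=> HA Ax; elim: n => [|n IH]; first by rewrite expr0; exact: subring1.
by rewrite exprS; exact: subringM.
Qed.

Lemma ideal_sub A I : ideal_of A I -> subset_of I A.
Proof. by case. Qed.

Lemma ideal0 A I : ideal_of A I -> I 0.
Proof. by case=> _ []. Qed.

Lemma idealD A I x y : ideal_of A I -> I x -> I y -> I (x + y).
Proof. by move=> [_ [_ [ID _]]]; exact: ID. Qed.

Lemma idealM A I a x : ideal_of A I -> A a -> I x -> I (a * x).
Proof. by move=> [_ [_ [_ IM]]]; exact: IM. Qed.

Lemma ideal_neq0 A I z : ideal_of A I -> ~ I z -> z != 0.
Proof. by move=> HI Iz; apply: contra_notN Iz => /eqP ->; exact: ideal0 HI. Qed.

Lemma ideal_inv_one A I u : ideal_of A I -> u != 0 -> A u^-1 -> I u -> I 1.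
Proof. by move=> HI u0 Au' Iu; rewrite -(mulVf u0); exact: idealM HI Au' Iu. Qed.

Lemma zero_ideal_prime A : subring A -> prime_of A (@zero_ideal K).
Proof.
move=> HA; split; [|split].
- split; [|split; [|split]] => //.
  + by move=> _ ->; exact: subring0.
  + by move=> _ _ -> ->; rewrite addr0.
  + by move=> a _ _ ->; rewrite mulr0.
- by move=> E; have := oner_neq0 K; rewrite E eqxx.
- by move=> a b _ _ /eqP; rewrite mulf_eq0 => /orP [/eqP|/eqP]; [left|right].
Qed.

End SubringsAndIdeals.

Section PolynomialValues.
Variable K : fieldType.
Implicit Types A S I : K -> Prop.

(* [polyval S x n z] : z = s_0 + s_1 x + ... + s_n x^n with all s_i in S. *)
Fixpoint polyval S (x : K) (n : nat) : K -> Prop :=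
  match n with
  | 0 => S
  | n'.+1 => fun z => exists d a, polyval S x n' d /\ S a /\ z = d + a * x ^+ n'.+1
  end.

Definition submodule A S := S 0 /\ (forall u v, S u -> S v -> S (u + v)) /\
  (forall a u, A a -> S u -> S (a * u)).

Lemma subring_submodule A : subring A -> submodule A A.
Proof.
move=> HA; split; first exact: subring0.
by split=> ? ? ? ?; [exact: subringD|exact: subringM].
Qed.

Lemma ideal_submodule A I : ideal_of A I -> submodule A I.
Proof. by move=> [_ [I0 [ID IM]]]. Qed.

Lemma polyval_submodule A S x n : submodule A S -> submodule A (polyval S x n).
Proof.
move=> HS; elim: n => [|n [IH0 [IHD IHM]]] //=.
have [S0 [SD SM]] := HS.
split; [|split].
- by exists 0, 0; do !split=> //; rewrite mul0r addr0.
- move=> _ _ [d [a [Hd [Sa ->]]]] [d' [a' [Hd' [Sa' ->]]]].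
  by exists (d + d'), (a + a'); do !split; [exact: IHD|exact: SD|ring].
- move=> b _ Ab [d [a [Hd [Sa ->]]]].
  by exists (b * d), (b * a); do !split; [exact: IHM|exact: SM|ring].
Qed.

Lemma polyval_subset S S' x n z : subset_of S S' -> polyval S x n z -> polyval S' x n z.
Proof.
move=> SS'; elim: n z => [|n IH] z /=; first exact: SS'.
by move=> [d [a [Hd [Sa ->]]]]; exists d, a; do !split; [exact: IH|exact: SS'].
Qed.

Lemma polyval_succ S x n z : S 0 -> polyval S x n z -> polyval S x n.+1 z.
Proof. by move=> S0 Hz; exists z, 0; do !split=> //; rewrite mul0r addr0. Qed.

Lemma polyval_widen S x n m z : S 0 -> (n <= m)%N -> polyval S x n z -> polyval S x m z.
Proof.
move=> S0; elim: m => [|m IH]; first by rewrite leqn0 => /eqP ->.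
rewrite leq_eqVlt => /orP [/eqP -> //|]; rewrite ltnS => le_nm Hz.
exact/polyval_succ/IH.
Qed.

Lemma polyval_add A S x n m u v : submodule A S ->
  polyval S x n u -> polyval S x m v -> polyval S x (n + m) (u + v).
Proof.
move=> HS Hu Hv; apply: (polyval_submodule x (n + m) HS).2.1.
  exact: (polyval_widen HS.1 (leq_addr _ _) Hu).
exact: (polyval_widen HS.1 (leq_addl _ _) Hv).
Qed.

Lemma polyval_monomial A S x a k n : submodule A S -> S a -> (k <= n)%N ->
  polyval S x n (a * x ^+ k).
Proof.
move=> HS Sa le_kn; apply: (polyval_widen HS.1 le_kn).
case: k {le_kn} => [|k] /=; first by rewrite expr0 mulr1.
exists 0, a; do !split=> //; last by rewrite add0r.
exact: (polyval_submodule x k HS).1.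
Qed.

Lemma polyval_mulX A S x n z : submodule A S ->
  polyval S x n z -> polyval S x n.+1 (x * z).
Proof.
move=> HS; elim: n z => [|n IH] z /=.
  move=> Sz; exists 0, z; split; first exact: HS.1.
  by split=> //; rewrite expr1 add0r mulrC.
move=> [d [a [Hd [Sa ->]]]]; exists (x * d), a; do !split=> //; first exact: IH.
by rewrite [in RHS]exprS mulrDr mulrCA.
Qed.

Lemma polyval_mulXn A S x n k z : submodule A S ->
  polyval S x n z -> polyval S x (n + k) (x ^+ k * z).
Proof.
move=> HS Hz; elim: k => [|k IH]; first by rewrite addn0 expr0 mul1r.
by rewrite addnS exprS -mulrA; exact: polyval_mulX HS IH.
Qed.

Lemma polyval_mul A S x m n e d : submodule A S ->
  polyval A x m e -> polyval S x n d -> polyval S x (n + m) (e * d).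
Proof.
move=> HS; elim: m e => [|m IH] e /=.
  by move=> Ae Hd; rewrite addn0; apply: (polyval_submodule x n HS).2.2.
move=> [e' [a [He' [Aa ->]]]] Hd.
have [_ [PD PM]] := polyval_submodule x (n + m.+1) HS.
rewrite mulrDl -mulrA; apply: PD.
  by rewrite addnS; apply: polyval_succ; [exact: HS.1|exact: IH].
by apply: PM => //; exact: polyval_mulXn HS Hd.
Qed.

Lemma polyval_split_const S y m z : polyval S y m.+1 z ->
  exists a h, S a /\ polyval S y m h /\ z = a + y * h.
Proof.
elim: m z => [|m IH] z /= [d [a [Hd [Sa ->]]]].
  by exists d, a; do !split=> //; rewrite expr1 mulrC.
have [a0 [h0 [Sa0 [Hh0 ->]]]] := IH d Hd.
exists a0, (h0 + a * y ^+ m.+1); do !split=> //; first by exists h0, a.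
by rewrite exprS; ring.
Qed.

(* Reversing the coefficients: x^k * q(y) = q*(x) for x y = 1 and deg q <= k. *)
Lemma polyval_reverse A S x y j k z : submodule A S -> x * y = 1 -> (j <= k)%N ->
  polyval S y j z -> polyval S x k (x ^+ k * z).
Proof.
move=> HS xy; elim: j z => [|j IH] z le_jk /=.
  by move=> Sz; rewrite mulrC; apply: (polyval_monomial _ HS).
move=> [d [a [Hd [Sa ->]]]].
rewrite mulrDr; apply: (polyval_submodule x k HS).2.1; first exact: IH (ltnW _) Hd.
have -> : x ^+ k * (a * y ^+ j.+1) = a * x ^+ (k - j.+1).
  have xyj : x ^+ j.+1 * y ^+ j.+1 = 1 by rewrite -exprMn xy expr1n.
  rewrite -{1}(subnK le_jk) exprD -[RHS]mulr1 -xyj.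
  move: (x ^+ (k - j.+1)) (x ^+ j.+1) (y ^+ j.+1) => u v w; ring.
exact: (polyval_monomial _ HS _ (leq_subr _ _)).
Qed.

Lemma polyval_ideal A I x n z : subring A -> ideal_of A I -> A x ->
  polyval I x n z -> I z.
Proof.
move=> HA HI Ax; elim: n z => [|n IH] z //= [d [a [Hd [Ia ->]]]].
apply: (idealD HI); first exact: IH.
by rewrite mulrC; apply: (idealM HI) => //; exact: subring_exp.
Qed.

End PolynomialValues.

Section LocalizationAtPrime.
Variable K : fieldType.
Variables R p : K -> Prop.
Hypothesis HR : subring R.
Hypothesis Hp : prime_of R p.

Definition Rp := localization R (prime_compl R p).
Definition pRp := localization p (prime_compl R p).

Lemma prime_compl_neq0 s : prime_compl R p s -> s != 0.
Proof. by move=> [_ ps]; apply: contra_notN ps => /eqP ->; exact: ideal0 Hp.1. Qed.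

Lemma prime_compl_mul s t :
  prime_compl R p s -> prime_compl R p t -> prime_compl R p (s * t).
Proof.
move=> [Rs ps] [Rt pt]; split; first exact: subringM.
by move=> /(Hp.2.2 _ _ Rs Rt) [].
Qed.

Lemma prime_compl1 : prime_compl R p 1.
Proof. by split; [exact: subring1|exact: Hp.2.1]. Qed.

Lemma Rp_frac a s : R a -> prime_compl R p s -> Rp (a / s).
Proof. by move=> Ra Cs; exists a, s. Qed.

Lemma pRp_frac a s : p a -> prime_compl R p s -> pRp (a / s).
Proof. by move=> pa Cs; exists a, s. Qed.

Lemma sub_Rp : subset_of R Rp.
Proof. by move=> x Rx; rewrite -[x]divr1; exact: Rp_frac prime_compl1. Qed.

Lemma sub_pRp : subset_of p pRp.
Proof. by move=> x px; rewrite -[x]divr1; exact: pRp_frac prime_compl1. Qed.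

Lemma frac_add s t a b : prime_compl R p s -> prime_compl R p t ->
  a / s + b / t = (a * t + b * s) / (s * t).
Proof.
move=> Cs Ct; have s0 := prime_compl_neq0 Cs; have t0 := prime_compl_neq0 Ct.
by field; rewrite s0 t0.
Qed.

Lemma frac_mul (s t a b : K) : a / s * (b / t) = (a * b) / (s * t).
Proof. by rewrite mulrACA invfM. Qed.

Lemma Rp_subring : subring Rp.
Proof.
split; [|split; [|split]].
- exact: sub_Rp (subring0 HR).
- exact: sub_Rp (subring1 HR).
- move=> _ _ [a [s [Ra [Cs ->]]]] [b [t [Rb [Ct ->]]]].
  rewrite -mulNr frac_add // mulNr; apply: Rp_frac; last exact: prime_compl_mul.
  by apply: subringB HR _ _; apply: subringM HR _ _ => //; [exact: Ct.1|exact: Cs.1].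
- move=> _ _ [a [s [Ra [Cs ->]]]] [b [t [Rb [Ct ->]]]].
  by rewrite frac_mul; apply: Rp_frac; [exact: subringM|exact: prime_compl_mul].
Qed.

Lemma pRp_ideal : ideal_of Rp pRp.
Proof.
have pR := ideal_sub Hp.1.
split; [|split; [|split]].
- by move=> _ [a [s [pa [Cs ->]]]]; apply: Rp_frac => //; exact: pR.
- exact: sub_pRp (ideal0 Hp.1).
- move=> _ _ [a [s [pa [Cs ->]]]] [b [t [pb [Ct ->]]]].
  rewrite frac_add //; apply: pRp_frac; last exact: prime_compl_mul.
  apply: (idealD Hp.1); rewrite mulrC; apply: (idealM Hp.1) => //.
    exact: Ct.1.
  exact: Cs.1.
- move=> _ _ [a [s [Ra [Cs ->]]]] [b [t [pb [Ct ->]]]].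
  by rewrite frac_mul; apply: pRp_frac; [exact: (idealM Hp.1)|exact: prime_compl_mul].
Qed.

Lemma pRp_proper : ~ pRp 1.
Proof.
move=> [a [s [pa [Cs E]]]]; apply: Cs.2.
by rewrite (_ : s = a) // -[s]mul1r E mulfVK // prime_compl_neq0.
Qed.

End LocalizationAtPrime.

Section DominatingPairs.
Variable K : fieldType.
Variables R p : K -> Prop.
Hypothesis HR : subring R.
Hypothesis Hp : prime_of R p.

Record dominating (A I : K -> Prop) : Prop := Dominating {
  dom_subring : subring A;
  dom_ideal : ideal_of A I;
  dom_proper : ~ I 1;
  dom_Rp : subset_of (Rp R p) A;
  dom_p : subset_of p I }.

Definition maximal_dominating (A I : K -> Prop) := dominating A I /\
  forall A' I', dominating A' I' -> subset_of A A' -> subset_of I I' ->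
    subset_of A' A /\ subset_of I' I.

Lemma dominating_Rp : dominating (Rp R p) (pRp R p).
Proof.
split; [exact: Rp_subring|exact: pRp_ideal|exact: pRp_proper|by []|].
exact: sub_pRp.
Qed.

(* The pair (A[x], I A[x]). *)
Lemma dominating_adjoin A I x : dominating A I -> ~ (exists n, polyval I x n 1) ->
  dominating (fun z => exists n, polyval A x n z) (fun z => exists n, polyval I x n z).
Proof.
move=> [HA HI I1 RpA pI] N.
have MA := subring_submodule HA; have MI := ideal_submodule HI.
split => //.
- split; [by exists 0%N; exact: subring0|split; [by exists 0%N; exact: subring1|split]].
  + move=> u v [n Hu] [m Hv]; exists (n + m)%N.
    rewrite -mulN1r; apply: (polyval_add MA Hu); apply: (polyval_submodule x m MA).2.2 => //.
    exact: subringN HA (subring1 HA).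
  + by move=> u v [n Hu] [m Hv]; exists (m + n)%N; exact: polyval_mul MA Hu Hv.
- split; first by move=> z [n Hz]; exists n; exact: (polyval_subset (ideal_sub HI) Hz).
  split; first by exists 0%N; exact: MI.1.
  split; first by move=> u v [n Hu] [m Hv]; exists (n + m)%N; exact: (polyval_add MI Hu).
  by move=> u v [n Hu] [m Hv]; exists (m + n)%N; exact: polyval_mul MI Hu Hv.
- by move=> z Hz; exists 0%N; exact: RpA.
- by move=> z Hz; exists 0%N; exact: pI.
Qed.

Lemma dominating_union (J : Type) (C : J -> Prop) (A_ I_ : J -> K -> Prop) :
  (exists j, C j) -> (forall j, C j -> dominating (A_ j) (I_ j)) ->
  (forall i j, C i -> C j ->
    (subset_of (A_ i) (A_ j) /\ subset_of (I_ i) (I_ j)) \/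
    (subset_of (A_ j) (A_ i) /\ subset_of (I_ j) (I_ i))) ->
  dominating (fun z => exists2 j, C j & A_ j z) (fun z => exists2 j, C j & I_ j z).
Proof.
move=> [j0 Cj0] dom tot.
have bound i j : C i -> C j -> exists2 k, C k &
    [/\ subset_of (A_ i) (A_ k), subset_of (I_ i) (I_ k),
        subset_of (A_ j) (A_ k) & subset_of (I_ j) (I_ k)].
  move=> Ci Cj; case: (tot i j Ci Cj) => [[? ?]|[? ?]]; [exists j|exists i] => //;
    by split=> //; exact: (fun z Hz => Hz).
have [_ _ _ Rp0 p0] := dom j0 Cj0.
split.
- split; [|split; [|split]].
  + by exists j0 => //; exact: subring0 (dom_subring (dom j0 Cj0)).
  + by exists j0 => //; exact: subring1 (dom_subring (dom j0 Cj0)).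
  + move=> u v [i Ci Au] [j Cj Av]; have [k Ck [Aik _ Ajk _]] := bound i j Ci Cj.
    by exists k => //; apply: subringB (dom_subring (dom k Ck)) (Aik _ Au) (Ajk _ Av).
  + move=> u v [i Ci Au] [j Cj Av]; have [k Ck [Aik _ Ajk _]] := bound i j Ci Cj.
    by exists k => //; apply: subringM (dom_subring (dom k Ck)) (Aik _ Au) (Ajk _ Av).
- split; [|split; [|split]].
  + by move=> z [j Cj Iz]; exists j => //; exact: (ideal_sub (dom_ideal (dom j Cj)) Iz).
  + by exists j0 => //; exact: ideal0 (dom_ideal (dom j0 Cj0)).
  + move=> u v [i Ci Iu] [j Cj Iv]; have [k Ck [_ Iik _ Ijk]] := bound i j Ci Cj.
    by exists k => //; apply: idealD (dom_ideal (dom k Ck)) (Iik _ Iu) (Ijk _ Iv).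
  + move=> a u [i Ci Aa] [j Cj Iu]; have [k Ck [Aik _ _ Ijk]] := bound i j Ci Cj.
    by exists k => //; apply: idealM (dom_ideal (dom k Ck)) (Aik _ Aa) (Ijk _ Iu).
- by move=> [j Cj]; exact: dom_proper (dom j Cj).
- by move=> z /Rp0; exists j0.
- by move=> z /p0; exists j0.
Qed.

Lemma exists_maximal_dominating : exists A I, maximal_dominating A I.
Proof.
pose T := {c : (K -> Prop) * (K -> Prop) | dominating c.1 c.2}.
pose le (s t : T) := subset_of (sval s).1 (sval t).1 /\ subset_of (sval s).2 (sval t).2.
have leP s t : boolp.asbool (le s t) <-> le s t by split=> /boolp.asboolP.
pose t0 : T := exist _ (Rp R p, pRp R p) dominating_Rp.
have [||Ch tot|t tmax] :=
    @classical_sets.ZL_preorder T t0 (fun s t => boolp.asbool (le s t)).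
- by move=> s; apply/leP; split=> z.
- move=> r s t /leP [rs1 rs2] /leP [st1 st2]; apply/leP.
  by split=> z Hz; [exact/st1/rs1|exact/st2/rs2].
- have [[c0 Cc0]|NCh] := classic (exists c, Ch c); last first.
    by exists t0 => s Cs; exfalso; apply: NCh; exists s.
  have tot' i j : Ch i -> Ch j -> le i j \/ le j i.
    by move=> Ci Cj; case: (tot i j Ci Cj) => /leP; [left|right].
  have dom := dominating_union (ex_intro _ c0 Cc0)
    (fun c (_ : Ch c) => proj2_sig c) tot'.
  by exists (exist _ (_, _) dom) => s Cs; apply/leP; split=> z Hz; exists s.
- exists (sval t).1, (sval t).2; split; first exact: (proj2_sig t).
  move=> A' I' dom' AA' II'.
  pose t' : T := exist _ (A', I') dom'.
  by have /leP := tmax t' ((leP t t').2 (conj AA' II')).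
Qed.

Section MaximalDominatingPair.
Variables A I : K -> Prop.
Hypothesis maxAI : maximal_dominating A I.

Let domAI := maxAI.1.
Let HA := dom_subring domAI.
Let HI := dom_ideal domAI.
Let I1 := dom_proper domAI.

Lemma maxdom_adjoin x : ~ A x -> exists n, polyval I x n 1.
Proof.
move=> Ax; apply: NNPP => N.
have [sub _] := maxAI.2 _ _ (dominating_adjoin domAI N)
  (fun z Hz => ex_intro _ 0%N Hz) (fun z Hz => ex_intro _ 0%N Hz).
apply: Ax; apply: sub; exists 1%N, 0, 1.
by split; [exact: subring0|split; [exact: subring1|rewrite add0r mul1r expr1]].
Qed.

Lemma maxdom_comaximal a : A a -> ~ I a -> exists i c, I i /\ A c /\ 1 = i + c * a.
Proof.
move=> Aa Ia; apply: NNPP => N.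
pose J z := exists i c, I i /\ A c /\ z = i + c * a.
have IJ : subset_of I J.
  by move=> z Iz; exists z, 0; do !split=> //; [exact: subring0|rewrite mul0r addr0].
have HJ : ideal_of A J.
  split; [|split; [exact/IJ/(ideal0 HI)|split]].
  - move=> _ [i [c [Ii [Ac ->]]]].
    exact: subringD HA (ideal_sub HI Ii) (subringM HA Ac Aa).
  - move=> _ _ [i [c [Ii [Ac ->]]]] [i' [c' [Ii' [Ac' ->]]]].
    exists (i + i'), (c + c'); split; first exact: idealD HI Ii Ii'.
    by split; [exact: subringD HA Ac Ac'|ring].
  - move=> d _ Ad [i [c [Ii [Ac ->]]]].
    by exists (d * i), (d * c); do !split; [exact: idealM HI Ad Ii|exact: subringM HA Ad Ac|ring].
have domJ : dominating A J.
  by split=> //; [exact: dom_Rp domAI|move=> z /(dom_p domAI) /IJ].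
apply: Ia; apply: (maxAI.2 _ _ domJ (fun z Hz => Hz) IJ).2.
by exists 0, 1; do !split; [exact: ideal0 HI|exact: subring1|rewrite add0r mul1r].
Qed.

Lemma maxdom_prime a b : A a -> A b -> I (a * b) -> ~ I a -> I b.
Proof.
move=> Aa Ab Iab Ia; have [i [c [Ii [Ac E]]]] := maxdom_comaximal Aa Ia.
rewrite -[b]mul1r E mulrDl -mulrA.
by apply: idealD HI _ _; [rewrite mulrC|]; apply: idealM HI _ _.
Qed.

(* From 1 = q(s^-1) with q over I, s^n = s^n q(s^-1) lies in I, hence so does s. *)
Lemma maxdom_inv s : A s -> ~ I s -> A s^-1.
Proof.
move=> As Is; apply: NNPP => As'.
have [n Hn] := maxdom_adjoin As'.
have := polyval_reverse (ideal_submodule HI) (mulfV (ideal_neq0 HI Is)) (leqnn n) Hn.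
move=> /(polyval_ideal HA HI As); rewrite mulr1.
elim: n {Hn} => [|n IH]; first by rewrite expr0.
by rewrite exprS => /(maxdom_prime As (subring_exp _ HA As) ^~ Is).
Qed.

Lemma maxdom_proper_ideal J : ideal_of A J -> ~ J 1 -> subset_of J I.
Proof.
move=> HJ J1 z Jz; apply: NNPP => Iz; apply: J1.
exact: (ideal_inv_one HJ (ideal_neq0 HI Iz) (maxdom_inv (ideal_sub HJ Jz) Iz) Jz).
Qed.

Lemma maxdom_local : local_ring A.
Proof.
exists I; split; first by split=> //; split=> // J HJ J1 _; exact: maxdom_proper_ideal.
move=> N [HN [N1 Nmax]] z; have NI := maxdom_proper_ideal HN N1.
by split; [exact: NI|exact: (Nmax I HI I1 NI)].
Qed.

(* A relation 1 = h(y) for y = 1/x gives y h' = 1 - h_0, a unit of A, which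
   turns the leading term a x^(n+1) of 1 = g(x) into one of degree <= n. *)
Lemma maxdom_degree_drop x y m n : x * y = 1 -> (m <= n)%N ->
  polyval I y m.+1 1 -> polyval I x n.+1 1 -> polyval I x n 1.
Proof.
move=> xy le_mn Hy [d [a [Hd [Ia ->]]]].
have MI := ideal_submodule HI.
have [g0 [h [Ig0 [Hh E]]]] := polyval_split_const Hy.
pose u := 1 - g0.
have Au : A u by apply: subringB HA (subring1 HA) (ideal_sub HI Ig0).
have Iu : ~ I u by move=> Iu; apply: I1; rewrite -(subrK g0 1); exact: idealD HI Iu Ig0.
have yh : y * h = u by rewrite /u {1}E addrC addKr.
have Hvh := (polyval_submodule y m MI).2.2 _ _ (maxdom_inv Au Iu) Hh.
have xn : x ^+ n * (u^-1 * h) = x ^+ n.+1.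
  have uu : u^-1 * u = 1 by rewrite mulVf // (ideal_neq0 HI Iu).
  rewrite -[RHS]mulr1 -uu -yh exprSr -[in LHS](mulr1 (x ^+ n)) -xy.
  by move: (x ^+ n) (y * h)^-1 => X W; ring.
apply: (polyval_submodule x n MI).2.1 => //; rewrite -xn.
apply: (polyval_submodule x n MI).2.2; first exact: (ideal_sub HI Ia).
exact: polyval_reverse MI xy le_mn Hvh.
Qed.

Lemma maxdom_no_two_sided_relation x y n m : x * y = 1 ->
  polyval I x n 1 -> polyval I y m 1 -> False.
Proof.
move: (leqnn (n + m)); move: {2}(n + m)%N => N.
elim: N x y n m => [|N IH] x y [|n] [|m] //= le_nm xy Hx Hy; try exact: I1.
have yx : y * x = 1 by rewrite mulrC.
have [le_mn|lt_nm] := leqP m n.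
  by apply: (IH x y n m.+1 _ xy _ Hy); [lia|exact: maxdom_degree_drop xy le_mn Hy Hx].
apply: (IH y x m n.+1 _ yx _ Hx); first lia.
exact: maxdom_degree_drop yx (ltnW lt_nm) Hx Hy.
Qed.

Lemma maxdom_valuation x : x != 0 -> A x \/ A x^-1.
Proof.
move=> x0; apply: NNPP => /not_or_and [Ax Ax'].
have [n Hn] := maxdom_adjoin Ax; have [m Hm] := maxdom_adjoin Ax'.
exact: (maxdom_no_two_sided_relation (mulfV x0) Hn Hm).
Qed.

Lemma maxdom_contract : contracts_to R I p.
Proof.
move=> r Rr; split; last exact: dom_p domAI r.
move=> Ir; apply: NNPP => pr; have Cr : prime_compl R p r by [].
apply: I1; apply: (ideal_inv_one HI (prime_compl_neq0 Hp Cr)) Ir.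
by apply: (dom_Rp domAI); rewrite -div1r; exact: Rp_frac (subring1 HR) Cr.
Qed.

Lemma maxdom_going_down : height_one R p -> going_down R A.
Proof.
move=> [_ [_ ht1]] p' q Q Hp' Hq p'q HQ Qq.
have qp : subset_of q p.
  move=> x qx; have Rx := ideal_sub Hq.1 qx.
  apply/(maxdom_contract Rx)/(maxdom_proper_ideal HQ.1 HQ.2.1).
  exact/(Qq x Rx).
have [p'0|p'p] := ht1 p' Hp' (fun x px => qp x (p'q x px)).
  exists (@zero_ideal K); split; first exact: zero_ideal_prime HA.
  split; first by move=> z ->; exact: ideal0 HQ.1.
  by move=> x Rx; split=> /p'0.
exists Q; split=> //; split=> // x Rx; rewrite (Qq x Rx); split; last exact: p'q.
by move=> /qp /p'p.
Qed.

Lemma maxdom_sub_Rp : is_localization_of R A -> subset_of A (Rp R p).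
Proof.
move=> [S [[SR [S1 [S0 _]]] AS]] z /AS [a [s [Ra [Ss ->]]]].
have s0 : s != 0 by apply: contra_notN S0 => /eqP <-.
have As' : A s^-1 by apply/AS; exists 1, s; rewrite div1r; do !split=> //; exact: subring1.
apply: Rp_frac => //; split; first exact: SR.
by move=> /(dom_p domAI) Is; exact/I1/(ideal_inv_one HI s0 As' Is).
Qed.

End MaximalDominatingPair.
End DominatingPairs.

Theorem proposition3p2 (K : fieldType) (R : K -> Prop) :
  subring R -> frac_field_of R -> perinormal R ->
  forall p : K -> Prop, height_one R p ->
    valuation_domain (localization R (prime_compl R p)).
Proof.
move=> HR _ perR p ht1p; have Hp := ht1p.1.
have [A [I maxAI]] := exists_maximal_dominating HR Hp.
have RA : subset_of R A by move=> z /(sub_Rp HR Hp) /(dom_Rp maxAI.1).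
have locA : is_localization_of R A.
  apply: perR; first by split; [exact: dom_subring maxAI.1|].
    exact: maxdom_local maxAI.
  exact (maxdom_going_down HR Hp maxAI ht1p).
split; first exact: Rp_subring.
move=> x x0; have AR := maxdom_sub_Rp HR maxAI locA.
by case: (maxdom_valuation maxAI x0) => /AR; [left|right].
Qed.
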